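(* Assume $\mathbb{E} Z<\infty$. Let $L_\infty=\inf_{n\in\mathbb{N}} L_n$. Then $L_\infty$ is finite almost surely. Consequently, the sequences $(R_n)_{n\ge1}$, $(L_n)_{n\ge1}$ and $(\Lambda_n)_{n\ge1}$ are almost surely bounded.
   Context: Let $Z,W,(Z_n)_{n\ge1},(W_n)_{n\ge1}$ be independent, identically distributed random variables taking values in $\mathbb{N}=\{1,2,3,\dots\}$. Define sets $T_n\subset\mathbb{Z}$ recursively by $T_n=\{n\}$ for $n\le 0$ and $T_n=\{n\}\cup T_{n-Z_n}\cup T_{n-W_n}$ for $n\ge1$ (the set of vertices reachable from $n$ in the directed graph on $\mathbb{Z}$ with edges $n\to n-Z_n$ and $n\to n-W_n$ for $n\ge1$). Let $\mathcal{L}_n=T_n\cap\{0,-1,-2,\dots\}$ (the leaves reached from $n$), $R_n=\max\mathcal{L}_n$, $L_n=\min\mathcal{L}_n$, and $\Lambda_n=|\mathcal{L}_n|$. *)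

From HB Require Import structures.
From mathcomp Require Import all_boot all_order all_algebra finmap.
From mathcomp Require Import all_classical all_reals all_analysis.
Set Implicit Arguments. Unset Strict Implicit. Unset Printing Implicit Defensive.
Import Order.TTheory GRing.Theory Num.Theory.
Local Open Scope classical_set_scope.
Local Open Scope ring_scope.

(* The reachable set T_n of the paper, for one fixed realisation
   z = (Z_n)_n, w = (W_n)_n (functions nat -> nat, used only at n >= 1).
   T_n = {n} for n <= 0 and T_n = {n} ∪ T_{n-Z_n} ∪ T_{n-W_n} for n >= 1.
   The recursion is implemented with a fuel argument k; since Z_n, W_n >= 1
   every step decreases the vertex by at least 1, so fuel `|n| suffices and
   Tset z w `|n| n is exactly T_n (as a list, possibly with repetitions). *)
Fixpoint Tset (z w : nat -> nat) (k : nat) (n : int) : seq int :=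
  match k with
  | 0%N => [:: n]
  | k.+1 => if n <= 0 then [:: n]
            else n :: (Tset z w k (n - (z `|n|%N)%:Z) ++ Tset z w k (n - (w `|n|%N)%:Z))
  end.

Definition Tn (z w : nat -> nat) (n : int) : seq int := Tset z w `|n|%N n.

Definition leaves (z w : nat -> nat) (n : int) : seq int :=
  undup [seq m <- Tn z w n | m <= 0].

(* R_n = max of the leaves, L_n = min of the leaves, Lambda_n = number of leaves
   (the leaf set is nonempty for every n, so the seed 'head 0 s' is irrelevant). *)
Definition Rn (z w : nat -> nat) (n : int) : int :=
  let s := leaves z w n in foldr Num.max (head 0 s) s.
Definition Ln (z w : nat -> nat) (n : int) : int :=
  let s := leaves z w n in foldr Num.min (head 0 s) s.
Definition Lambdan (z w : nat -> nat) (n : int) : nat := size (leaves z w n).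

Definition Linf (R : realType) (z w : nat -> nat) : \bar R :=
  ereal_inf [set ((Ln z w n%:Z)%:~R)%:E | n in [set n : nat | (0 < n)%N]].

Definition mutual_indep d (Omega : measurableType d) (R : realType)
    (P : probability Omega R) (I : choiceType) (X : I -> Omega -> nat) : Prop :=
  forall (F : {fset I}) (B : I -> set nat),
    P (\bigcap_(i in [set` F]) (X i @^-1` B i)) =
      (\prod_(i <- F) P (X i @^-1` B i))%E.

(* Since Z_k and Z have the same law,
   sum_k P(Z_(k+1) > k) = sum_k P(Z > k) = E Z < oo, so by the first
   Borel–Cantelli lemma almost surely Z_(k+1) <= k for all large k, and
   likewise for W.  On that event the edge targets k - Z_k and k - W_k
   (k >= 1) are bounded below by some c <= 0 (large k give targets >= 1, the
   finitely many others are bounded).  Every vertex of T_n is then at least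
   min(n, c), so every leaf lies in [c, 0]; this bounds L_oo, R_n, L_n and
   the number Lambda_n of leaves uniformly in n. *)
From HB Require Import structures.
From mathcomp Require Import all_boot all_order all_algebra finmap.
From mathcomp Require Import all_classical all_reals all_analysis.
From mathcomp Require Import zify measurable_realfun.
Import Order.TTheory GRing.Theory Num.Theory.
Local Open Scope classical_set_scope.
Local Open Scope ring_scope.

Definition target_floor (z : nat -> nat) (c : int) : Prop :=
  forall k : nat, (0 < k)%N -> c <= k%:Z - (z k)%:Z.

Lemma target_floor_le (z : nat -> nat) (c c' : int) :
  c' <= c -> target_floor z c -> target_floor z c'.
Proof. by move=> c'c zc k k0; apply: le_trans c'c (zc k k0). Qed.

Lemma eventually_target_floor (z : nat -> nat) :
  (exists N, forall k, (N <= k)%N -> (z k.+1 <= k)%N) ->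
  exists2 c : int, c <= 0 & target_floor z c.
Proof.
case=> N zN; exists (- (\max_(i < N.+1) z i)%N%:Z); first by rewrite oppr_le0.
move=> k k0; case: (leqP k N) => [kN|Nk].
  have /= := @leq_bigmax _ (fun i : 'I_N.+1 => z i) (Ordinal (kN : (k < N.+1)%N)).
  by lia.
by have := zN k.-1 ltac:(lia); rewrite prednK //; lia.
Qed.

Lemma eventually_common_target_floor (z w : nat -> nat) :
  (exists N, forall k, (N <= k)%N -> (z k.+1 <= k)%N) ->
  (exists N, forall k, (N <= k)%N -> (w k.+1 <= k)%N) ->
  exists c : int, [/\ c <= 0, target_floor z c & target_floor w c].
Proof.
move=> /eventually_target_floor [cz cz_le0 zc] /eventually_target_floor [cw cw_le0 wc].
exists (Num.min cz cw); split.
- by rewrite ge_min cz_le0.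
- by apply: target_floor_le zc; rewrite ge_min lexx.
- by apply: target_floor_le wc; rewrite ge_min lexx orbT.
Qed.

Lemma mem_foldr_sel (T : eqType) (op : T -> T -> T) (x0 : T) (s : seq T) :
  (forall x y, (op x y == x) || (op x y == y)) -> foldr op x0 s \in x0 :: s.
Proof.
move=> opP; elim: s => [|a s IH] /=; first exact: mem_head.
have /orP[/eqP->|/eqP->] := opP a (foldr op x0 s); first by rewrite !inE eqxx orbT.
by move: IH; rewrite !inE => /orP[->|->]; rewrite ?orbT.
Qed.

Lemma mem_foldr_sel_head (T : eqType) (op : T -> T -> T) (x0 : T) (s : seq T) :
  (forall x y, (op x y == x) || (op x y == y)) ->
  foldr op (head x0 s) s \in x0 :: s.
Proof.
move=> opP; have := @mem_foldr_sel _ op (head x0 s) s opP; case: s => [|a s] //=.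
by rewrite !inE => /orP[->|->]; rewrite ?orbT.
Qed.

Section Leaves.
Context {z w : nat -> nat} {c : int}.
Hypotheses (zc : target_floor z c) (wc : target_floor w c) (c_le0 : c <= 0).

Lemma Tset_ge_min k v m : m \in Tset z w k v -> Num.min v c <= m.
Proof.
elim: k v => [|k IH] v /=; first by rewrite inE => /eqP ->; rewrite ge_min lexx.
case: ifP => [_|/negbT v_gt0]; first by rewrite inE => /eqP ->; rewrite ge_min lexx.
have v_pos : (0 < `|v|)%N by lia.
have := zc _ v_pos; have := wc _ v_pos.
rewrite inE mem_cat => wv zv /orP[/eqP ->|/orP[] /IH]; rewrite ?ge_min ?lexx //; lia.
Qed.

Lemma mem_leaves_bounds {n : nat} {m : int} :
  (0 < n)%N -> m \in leaves z w n%:Z -> c <= m <= 0.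
Proof.
move=> n0; rewrite mem_undup mem_filter => /andP[m_le0 /Tset_ge_min].
by rewrite m_le0 andbT ge_min => /orP[]; lia.
Qed.

Lemma mem_leaves0_bounds {n : nat} {m : int} :
  (0 < n)%N -> m \in 0 :: leaves z w n%:Z -> c <= m <= 0.
Proof. by move=> n0; rewrite inE => /orP[/eqP->|/mem_leaves_bounds->//]; rewrite c_le0. Qed.

Lemma Rn_bounds {n : nat} : (0 < n)%N -> c <= Rn z w n%:Z <= 0.
Proof.
move=> n0; apply: (mem_leaves0_bounds n0).
by apply: mem_foldr_sel_head => x y; rewrite /Num.max; case: ifP; rewrite eqxx ?orbT.
Qed.

Lemma Ln_bounds {n : nat} : (0 < n)%N -> c <= Ln z w n%:Z <= 0.
Proof.
move=> n0; apply: (mem_leaves0_bounds n0).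
by apply: mem_foldr_sel_head => x y; rewrite /Num.min; case: ifP; rewrite eqxx ?orbT.
Qed.

Lemma Lambdan_le {n : nat} : (0 < n)%N -> (Lambdan z w n%:Z <= `|c|.+1)%N.
Proof.
move=> n0; rewrite -(size_iota 0 `|c|.+1) -(size_map (fun i : nat => - i%:Z)).
apply: uniq_leq_size; first exact: undup_uniq.
move=> m /(mem_leaves_bounds n0) m_bounds.
by apply/mapP; exists `|m|%N; rewrite ?mem_iota; lia.
Qed.

Lemma Linf_fin_num (R : realType) : Linf R z w \is a fin_num.
Proof.
rewrite fin_numElt; apply/andP; split.
  apply: (@lt_le_trans _ _ (c%:~R)%:E); first exact: ltNyr.
  apply: le_ereal_inf_tmp => _ [n /= n0 <-]; rewrite lee_fin ler_int.
  by have /andP[] := Ln_bounds n0.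
apply: (@le_lt_trans _ _ ((Ln z w 1%:Z)%:~R : R)%:E); last exact: ltry.
by apply: ge_ereal_inf; exists ((Ln z w 1%:Z)%:~R : R)%:E => //; exists 1%N.
Qed.

End Leaves.

Lemma nneseries_ltn (R : realType) (m : nat) :
  (\sum_(k <oo) (((k < m)%N%:R : R)%:E) = (m%:R : R)%:E)%E.
Proof.
rewrite (@nneseries_split R _ 0 m); last by move=> k _; rewrite lee_fin.
rewrite eseries0 ?adde0; last by move=> i; rewrite add0n => mi _; rewrite ltnNge mi.
rewrite (eq_big_nat _ _ (F2 := fun=> 1%E)); last by move=> i /andP[_ ->].
elim: m => [|m IH]; first by rewrite big_geq.
by rewrite big_nat_recr //= IH -EFinD -natr1.
Qed.

Section TailSum.
Context {d : measure_display} {Omega : measurableType d} {R : realType}.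
Local Open Scope ereal_scope.

Lemma integral_nat_tail (mu : {measure set Omega -> \bar R}) (Y : Omega -> nat) :
  (forall B : set nat, measurable (Y @^-1` B)) ->
  \int[mu]_x ((Y x)%:R : R)%:E = \sum_(k <oo) mu (Y @^-1` [set m | (k < m)%N]).
Proof.
move=> mY.
have indic_ltn k x : (\1_(Y @^-1` [set m | (k < m)%N]) x : R) = (k < Y x)%N%:R.
  rewrite indicE; congr (nat_of_bool _)%:R.
  by apply/idP/idP => h; [exact: set_mem h|exact: mem_set h].
transitivity (\int[mu]_x \sum_(k <oo) ((k < Y x)%N%:R : R)%:E).
  by apply: eq_integral => x _; rewrite nneseries_ltn.
rewrite integral_nneseries //; last first.
  move=> k; under eq_fun do rewrite -indic_ltn.
  exact/measurable_EFinP/measurable_indic.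
apply: eq_eseriesr => k _; rewrite -(setIT (Y @^-1` _)) -integral_indic //.
by apply: eq_integral => x _; rewrite indic_ltn.
Qed.

Lemma ae_eventually_le_pred (P : probability Omega R) {X : nat -> Omega -> nat}
    {Y : Omega -> nat} :
  (forall B : set nat, measurable (Y @^-1` B)) ->
  (forall n (B : set nat), (0 < n)%N -> measurable (X n @^-1` B)) ->
  (forall n (B : set nat), (0 < n)%N -> P (X n @^-1` B) = P (Y @^-1` B)) ->
  \int[P]_x ((Y x)%:R : R)%:E < +oo ->
  {ae P, forall w, exists N, forall k, (N <= k)%N -> (X k.+1 w <= k)%N}.
Proof.
move=> mY mX XY EY.
pose F k := X k.+1 @^-1` [set m | (k < m)%N].
have mF k : measurable (F k) by exact: mX.
have PF0 : P (lim_sup_set F) = 0.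
  apply: lim_sup_set_cvg0 => //.
  rewrite (eq_eseriesr (g := fun k => P (Y @^-1` [set m | (k < m)%N]))).
    by rewrite -integral_nat_tail.
  by move=> k _; exact: XY.
exists (lim_sup_set F); split => //.
  by apply: bigcapT_measurable => k; apply: bigcup_measurable.
move=> w /= not_eventually n _; apply: contrapT => notF; apply: not_eventually.
by exists n => k nk; rewrite leqNgt; apply/negP => Xk; apply: notF; exists k.
Qed.

End TailSum.

Theorem theorem1 (d : measure_display) (Omega : measurableType d) (R : realType)
  (P : probability Omega R) (Z W : nat -> Omega -> nat) :
  (* Z_n, W_n (n >= 1) are random variables ... *)
  (forall n (B : set nat), (0 < n)%N ->
     measurable (Z n @^-1` B) /\ measurable (W n @^-1` B)) ->
  (* ... with values in N = {1,2,3,...} ... *)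
  (forall n omega, (0 < n)%N -> (0 < Z n omega)%N /\ (0 < W n omega)%N) ->
  (* ... mutually independent ... *)
  mutual_indep P (fun p : bool * nat => if p.1 then Z p.2.+1 else W p.2.+1) ->
  (* ... and identically distributed (common law that of Z = Z_1) *)
  (forall n (B : set nat), (0 < n)%N ->
     P (Z n @^-1` B) = P (Z 1%N @^-1` B) /\ P (W n @^-1` B) = P (Z 1%N @^-1` B)) ->
  (* E Z < oo *)
  (\int[P]_x (((Z 1%N x)%:R : R)%:E) < +oo)%E ->
  {ae P, forall omega,
     Linf R (fun n => Z n omega) (fun n => W n omega) \is a fin_num} /\
  {ae P, forall omega, exists M : int, forall n : nat, (0 < n)%N ->
     `|Rn (fun k => Z k omega) (fun k => W k omega) n%:Z| <= M} /\
  {ae P, forall omega, exists M : int, forall n : nat, (0 < n)%N ->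
     `|Ln (fun k => Z k omega) (fun k => W k omega) n%:Z| <= M} /\
  {ae P, forall omega, exists M : nat, forall n : nat, (0 < n)%N ->
     (Lambdan (fun k => Z k omega) (fun k => W k omega) n%:Z <= M)%N}.
Proof.
move=> mZW _ _ ZW_law EZ.
have mZ1 B : measurable (Z 1%N @^-1` B) by case: (mZW 1%N B isT).
have evZ := ae_eventually_le_pred P mZ1 (fun n B n0 => (mZW n B n0).1)
  (fun n B n0 => (ZW_law n B n0).1) EZ.
have evW := ae_eventually_le_pred P mZ1 (fun n B n0 => (mZW n B n0).2)
  (fun n B n0 => (ZW_law n B n0).2) EZ.
have floor : {ae P, forall w, exists c : int,
    [/\ c <= 0, target_floor (Z ^~ w) c & target_floor (W ^~ w) c]}.
  by apply: filterS (filterI evZ evW) => w [];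
    exact: (eventually_common_target_floor (Z ^~ w) (W ^~ w)).
have norm_le c x : c <= x <= 0 -> `|x| <= - c.
  by case/andP=> cx x_le0; rewrite ler0_norm // lerN2.
split; [|split; [|split]]; apply: filterS floor => w [c [c_le0 Zc Wc]].
- exact: Linf_fin_num Zc Wc c_le0 R.
- by exists (- c) => n n0; apply/norm_le/(Rn_bounds Zc Wc c_le0 n0).
- by exists (- c) => n n0; apply/norm_le/(Ln_bounds Zc Wc c_le0 n0).
- by exists `|c|%N.+1 => n n0; exact: (Lambdan_le Zc Wc c_le0 n0).
Qed.
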